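(* Let $z_1,\dots,z_m\in\partial\mathbb{D}$ be distinct, $\mu=\sum_{j=1}^m\mu_j\delta_{z_j}$ with $\mu_j>0$, $\sum\mu_j=1$, and $G$ real-valued on $\{z_1,\dots,z_m\}$, numbered so that $G(z_1)\ge\cdots\ge G(z_m)$. Let $K_1,\dots,K_L$ be the $K$-groups $K_i=\{k_{i-1}+1,\dots,k_i\}$ ($k_0=0$, $k_L=m$), i.e. maximal blocks of consecutive indices on which $G(z_\cdot)$ is constant. Let $\mu_t=e^{tG}\mu/\int e^{tG}d\mu$ and fix $n\in K_r$. Then there exist $r_0>0$, $T\ge0$ and $C$ such that for all $t\ge T$ and each $j=1,\dots,k_{r-1}$, the disk $\{z:|z-z_j|<r_0\}$ contains exactly one zero $z_j^{(n)}(t)$ of $\Phi_n(z;\mu_t)$, and \[ |z_j^{(n)}(t)-z_j|\le C\exp\bigl(t[G(z_n)-G(z_j)]\bigr). \]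
   Context: $\Phi_n(z;\nu)$ denotes the monic orthogonal polynomial of degree $n$ for a positive measure $\nu$ on $\partial\mathbb{D}$ whose support has at least $n$ points (the unique monic degree-$n$ polynomial orthogonal in $L^2(\nu)$ to all lower-degree polynomials). *)

From HB Require Import structures.
From mathcomp Require Import all_boot all_order all_algebra.
From mathcomp Require Import complex.
From mathcomp Require Import classical_sets reals sequences exp.

Set Implicit Arguments.
Unset Strict Implicit.
Unset Printing Implicit Defensive.

Import Order.TTheory GRing.Theory Num.Theory.
Local Open Scope complex_scope.
Local Open Scope ring_scope.

Section OPUC.
Variable R : realType.
Local Notation C := (R[i]).

(* The discrete measure nu = sum_j w j * delta_(z j) on the points z : 'I_m -> C.
   L^2(nu) inner product  <f, g> = \int f * conj g dnu. *)
Definition inner_disc (m : nat) (w : 'I_m -> R) (z : 'I_m -> C) (f g : {poly C}) : C :=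
  \sum_(j < m) (w j)%:C * f.[z j] * (g.[z j])^*.

Definition is_monic_OP (m : nat) (w : 'I_m -> R) (z : 'I_m -> C) (n : nat)
    (p : {poly C}) : Prop :=
  [/\ p \is monic, size p = n.+1 &
      forall q : {poly C}, (size q <= n)%N -> inner_disc w z p q = 0].

Definition Phi (m : nat) (w : 'I_m -> R) (z : 'I_m -> C) (n : nat) : {poly C} :=
  xget 0 [set p | is_monic_OP w z n p].

Definition tilted (m : nat) (mu G : 'I_m -> R) (t : R) : 'I_m -> R :=
  fun j => mu j * expR (t * G j) / \sum_(k < m) mu k * expR (t * G k).

(* With 0-based indices (index j : 'I_m stands for z_{j+1}), and n the
   1-based index in {1,..,m}: j lies in one of the K-groups K_1,..,K_{r-1}
   preceding the K-group K_r containing n, i.e. j+1 <= k_{r-1}.  Since the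
   K-groups are the maximal blocks of consecutive indices on which G is
   constant, this means: j+1 < n and G is not constant on the block of
   indices from j+1 to n (1-based). *)
Definition in_earlier_Kgroup (m : nat) (G : 'I_m -> R) (n : nat) (j : 'I_m) : bool :=
  (j.+1 < n)%N &&
  ~~ [forall i : 'I_m, [forall i' : 'I_m,
        ((j <= i)%N && (i < n)%N && (j <= i')%N && (i' < n)%N) ==> (G i == G i')]].

End OPUC.

(* Write [P] for [Phi_n(.; mu_t)] with [n = k + 1], and let [j < k] index a
   node before [z_n].  Orthogonality of [P] to [prod_(i < k, i <> j) (X - z_i)],
   together with the extremal property of [P] tested on
   [X * prod_(i < k) (X - z_i)], gives [w_j |P(z_j)| <= C * sum_(i >= k) w_i]
   for any weights [w].  For the tilted weights the right-hand side is
   [O(e^(t G(z_n)))] while [w_j] is of order [e^(t G(z_j))], so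
   [|P(z_j)| = O(e^(t (G(z_n) - G(z_j))))], which tends to 0 when [z_j] lies in
   an earlier K-group.
   Zeros of [P] never come in pairs near a node: if [P = (X - c1)(X - c2) h]
   with [c1], [c2] close to [z_j], orthogonality of [P] to [h] and to
   [(X - c2) h] forces [h] to vanish at every other node, which is too many
   zeros for its degree.  So once [|P(z_j)|] is small, [P] has exactly one
   zero near [z_j], it is simple, and its distance to [z_j] is
   [O(|P(z_j)|)]. *)

From HB Require Import structures.
From mathcomp Require Import all_boot all_order all_algebra.
From mathcomp Require Import complex.
From mathcomp Require Import classical_sets reals sequences exp.
From mathcomp Require Import lra ring.

Set Implicit Arguments.
Unset Strict Implicit.
Unset Printing Implicit Defensive.

Import Order.TTheory GRing.Theory Num.Theory.
Import ComplexField.Normc.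
Local Open Scope complex_scope.
Local Open Scope ring_scope.

Local Notation Re := complex.Re.
Local Notation Im := complex.Im.

Section ComplexModulus.
Variable R : rcfType.
Implicit Types x y a b c : R[i].

Lemma normr_normc x : `|x| = (normc x)%:C.
Proof. by case: x => a b; rewrite normc_def. Qed.

Lemma normc_ge0 x : 0 <= normc x.
Proof. by rewrite -ler0c -normr_normc. Qed.

Lemma normc_eq0 x : (normc x == 0) = (x == 0).
Proof. by apply/eqP/eqP => [/eq0_normc | ->]; rewrite ?normc0. Qed.

Lemma normcB x y : normc (x - y) = normc (y - x).
Proof. by rewrite -normcN opprB. Qed.

Lemma normc_conjC x : normc x^* = normc x.
Proof. by apply: complexI; rewrite -!normr_normc normcJ. Qed.

Lemma conjC_real (a : R) : (a%:C)^* = a%:C.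
Proof. by apply/conj_Creal/complex_realP; exists a. Qed.

Lemma normc_real (a : R) : normc a%:C = `|a|.
Proof. by rewrite /normc /= expr0n /= addr0 sqrtr_sqr. Qed.

Lemma normc_sqr x : (normc x ^+ 2)%:C = x * x^*.
Proof. by rewrite rmorphXn /= -normr_normc sqr_normc. Qed.

Lemma normc_mulC x : (normc x)%:C * (normc x)%:C = x * x^*.
Proof. by rewrite -rmorphM; exact: normc_sqr. Qed.

Lemma normc_sqr_ReIm x : normc x ^+ 2 = Re x ^+ 2 + Im x ^+ 2.
Proof. by apply: complexI; rewrite add_Re2_Im2 normr_normc rmorphXn. Qed.

Lemma normc_prod (I : Type) (r : seq I) (P : pred I) (F : I -> R[i]) :
  normc (\prod_(i <- r | P i) F i) = \prod_(i <- r | P i) normc (F i).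
Proof. by elim/big_rec2: _ => [|i u v _ <-]; rewrite ?normc1 ?normcM. Qed.

Lemma normc_sum_le (I : Type) (r : seq I) (P : pred I) (F : I -> R[i]) :
  normc (\sum_(i <- r | P i) F i) <= \sum_(i <- r | P i) normc (F i).
Proof.
elim/big_rec2: _ => [|i u v _ IH]; first by rewrite normc0.
by apply: le_trans (le_normcD _ _) _; rewrite lerD2l.
Qed.

Lemma ReD x y : Re (x + y) = Re x + Re y.
Proof. by case: x; case: y. Qed.

Lemma Re_sum (I : Type) (r : seq I) (P : pred I) (F : I -> R[i]) :
  Re (\sum_(i <- r | P i) F i) = \sum_(i <- r | P i) Re (F i).
Proof. by elim/big_rec2: _ => // i u v _ <-; rewrite ReD. Qed.

Lemma Re_realM (a : R) x : Re (a%:C * x) = a * Re x.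
Proof. by case: x => u v /=; rewrite mul0r subr0. Qed.

Lemma Re_le_normc x : Re x <= normc x.
Proof.
rewrite -lecR -normr_normc (le_trans _ (normc_ge_Re _)) //.
by rewrite lecR ler_norm.
Qed.

Lemma Re_conjM_le b x : normc b = 1 -> Re (b^* * x) <= normc x.
Proof.
by move=> b1; rewrite (le_trans (Re_le_normc _)) // normcM normc_conjC b1 mul1r.
Qed.

Lemma normc_sub_circle_le2 x y : normc x = 1 -> normc y = 1 -> normc (x - y) <= 2.
Proof. by move=> x1 y1; rewrite (le_trans (le_normcD _ _)) // normcN x1 y1. Qed.

Lemma Re_conjM_chord a b : normc a = 1 -> normc b = 1 ->
  Re (b^* * (a - b)) = - normc (a - b) ^+ 2 / 2.
Proof.
move=> a1 b1; rewrite normc_sqr_ReIm.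
have := normc_sqr_ReIm a; have := normc_sqr_ReIm b; rewrite a1 b1 expr1n.
by case: a {a1} => a1 a2; case: b {b1} => b1 b2 /=; nra.
Qed.

Lemma Re_conjM_far_le a b c (d : R) : normc a = 1 -> normc b = 1 ->
  0 <= d -> d <= normc (a - b) -> normc (c - b) <= d ^+ 2 / 4 ->
  Re (b^* * (a - c)) <= - (d ^+ 2 / 4).
Proof.
move=> a1 b1 d0 dab cb.
have -> : a - c = (a - b) + (b - c) by rewrite addrA subrK.
rewrite mulrDr ReD Re_conjM_chord //.
have := Re_conjM_le (b - c) b1; rewrite normcB.
have : d ^+ 2 <= normc (a - b) ^+ 2 by rewrite lerXn2r ?nnegrE ?normc_ge0.
lra.
Qed.

End ComplexModulus.

Section InnerProduct.
Variable R : realType.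
Variable m : nat.
Variable w : 'I_m -> R.
Variable z : 'I_m -> R[i].
Hypothesis w_gt0 : forall j, 0 < w j.
Local Notation ip := (inner_disc w z).
Implicit Types p q f g h : {poly R[i]}.

Definition norm2_disc p := \sum_(j < m) w j * normc p.[z j] ^+ 2.

Lemma inner_disc_self p : ip p p = (norm2_disc p)%:C.
Proof.
rewrite /inner_disc /norm2_disc rmorph_sum; apply: eq_bigr => j _.
by rewrite rmorphM /= normc_sqr mulrA.
Qed.

Lemma inner_discC f g : ip g f = (ip f g)^*.
Proof.
rewrite /inner_disc rmorph_sum; apply: eq_bigr => j _.
by rewrite !rmorphM /= conjC_real conjCK mulrAC.
Qed.

Lemma inner_discDl f g h : ip (f + g) h = ip f h + ip g h.
Proof.
rewrite /inner_disc -big_split; apply: eq_bigr => j _ /=.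
by rewrite hornerD mulrDr mulrDl.
Qed.

Lemma inner_discZl a f g : ip (a *: f) g = a * ip f g.
Proof.
rewrite /inner_disc mulr_sumr; apply: eq_bigr => j _ /=.
by rewrite hornerZ !mulrA [_ * a]mulrC.
Qed.

Lemma inner_discBl f g h : ip (f - g) h = ip f h - ip g h.
Proof. by rewrite -scaleN1r inner_discDl inner_discZl mulN1r. Qed.

Lemma inner_disc_suml (I : Type) (r : seq I) (P : pred I) (F : I -> {poly R[i]}) g :
  ip (\sum_(i <- r | P i) F i) g = \sum_(i <- r | P i) ip (F i) g.
Proof.
elim/big_rec2: _ => [|i a b _ <-]; last by rewrite inner_discDl.
by rewrite /inner_disc big1 // => j _; rewrite horner0 mulr0 mul0r.
Qed.

Lemma inner_discDr f g h : ip f (g + h) = ip f g + ip f h.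
Proof.
rewrite /inner_disc -big_split; apply: eq_bigr => j _ /=.
by rewrite hornerD rmorphD mulrDr.
Qed.

Lemma inner_discZr f a g : ip f (a *: g) = a^* * ip f g.
Proof.
rewrite /inner_disc mulr_sumr; apply: eq_bigr => j _ /=.
by rewrite hornerZ rmorphM mulrCA.
Qed.

Lemma inner_disc0r f : ip f 0 = 0.
Proof. by rewrite /inner_disc big1 // => j _; rewrite horner0 rmorph0 mulr0. Qed.

Lemma norm2_disc_ge0 p : 0 <= norm2_disc p.
Proof. by apply: sumr_ge0 => j _; rewrite mulr_ge0 ?sqr_ge0 ?ltW. Qed.

Lemma norm2_disc_eq0 p : norm2_disc p = 0 -> forall j, p.[z j] = 0.
Proof.
move=> p0 j; apply/eqP; rewrite -normc_eq0.
have summand_ge0 i : true -> 0 <= w i * normc p.[z i] ^+ 2.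
  by rewrite mulr_ge0 ?sqr_ge0 ?ltW.
move/eqP: (psumr_eq0P summand_ge0 p0 (i := j) isT).
by rewrite mulf_eq0 gt_eqF ?w_gt0 //= expf_eq0.
Qed.

End InnerProduct.

Lemma monic_coef_size (R : nzRingType) (p : {poly R}) n :
  p \is monic -> size p = n.+1 -> p`_n = 1.
Proof. by move=> /monicP; rewrite lead_coefE => <- ->. Qed.

Lemma size_subZ_coef_leq (R : nzRingType) (p q : {poly R}) n :
  (size p <= n.+1)%N -> q \is monic -> size q = n.+1 ->
  (size (p - p`_n *: q)%R <= n)%N.
Proof.
move=> sp qm sq; apply/leq_sizeP => j; rewrite leq_eqVlt => /orP[/eqP <-|nj].
  by rewrite coefB coefZ (monic_coef_size qm sq) mulr1 subrr.
have qj : q`_j = 0 by rewrite nth_default ?sq.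
by rewrite coefB coefZ qj mulr0 subr0 nth_default // (leq_trans sp).
Qed.

Lemma poly_vanish_eq0 (F : idomainType) (I : finType) (x : I -> F) (A : {pred I})
    (p : {poly F}) :
  injective x -> (forall i, i \in A -> p.[x i] = 0) -> (size p <= #|A|)%N -> p = 0.
Proof.
move=> x_inj p0 sp; apply/eqP; apply: contraTT sp => pn0; rewrite -ltnNge.
rewrite -(size_image x A); apply: max_poly_roots pn0 _ _.
  by apply/allP => _ /mapP [i Ai ->]; rewrite /root p0 // -mem_enum.
by rewrite map_inj_uniq // enum_uniq.
Qed.

Section OrthogonalPolynomials.
Variable R : realType.
Variable m : nat.
Variable w : 'I_m -> R.
Variable z : 'I_m -> R[i].
Hypothesis w_gt0 : forall j, 0 < w j.
Hypothesis z_inj : injective z.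
Local Notation ip := (inner_disc w z).
Local Notation OP := (is_monic_OP w z).
Local Notation Phi := (Phi w z).
Implicit Types p q : {poly R[i]}.

Lemma norm2_disc_gt0 p : p != 0 -> (size p <= m)%N -> 0 < norm2_disc w z p.
Proof.
move=> pn0 sp; rewrite lt_def norm2_disc_ge0 // andbT.
apply: contra pn0 => /eqP /norm2_disc_eq0 p0; apply/eqP.
by apply: (@poly_vanish_eq0 _ _ z predT) => // [i _|]; rewrite ?p0 ?cardT ?size_enum_ord.
Qed.

Lemma orthogonal_lower_degree n p :
  (forall l, (l < n)%N -> OP l (Phi l)) ->
  (forall l, (l < n)%N -> ip p (Phi l) = 0) ->
  forall q, (size q <= n)%N -> ip p q = 0.
Proof.
elim: n => [|n IH] OPl pPhi q sq.
  by move: sq; rewrite size_poly_leq0 => /eqP ->; apply: inner_disc0r.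
have [Phim sPhi _] := OPl n (ltnSn n).
rewrite -(subrK (q`_n *: Phi n) q) inner_discDr inner_discZr pPhi // mulr0 addr0.
apply: IH (size_subZ_coef_leq sq Phim sPhi) => l ln; [apply: OPl | apply: pPhi];
  exact: ltnW.
Qed.

Lemma Phi_orthogonal l l' :
  OP l (Phi l) -> OP l' (Phi l') -> l != l' -> ip (Phi l') (Phi l) = 0.
Proof.
move=> [_ sl orthl] [_ sl' orthl']; case: ltngtP => // ll' _.
  by apply: orthl'; rewrite sl.
by rewrite inner_discC orthl ?sl' // conjC0.
Qed.

(* Gram-Schmidt: [X^n] minus its projection on [Phi 0, ..., Phi (n-1)]. *)
Lemma Phi_OP n : (n <= m)%N -> OP n (Phi n).
Proof.
elim/ltn_ind: n => n IH nm; rewrite /Phi; apply: xgetPex.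
case: n IH nm => [|n] IH nm.
  exists 1; split; rewrite ?monic1 ?size_poly1 // => q.
  by rewrite size_poly_leq0 => /eqP ->; apply: inner_disc0r.
have OPl l : (l < n.+1)%N -> OP l (Phi l).
  by move=> ln; apply: IH => //; rewrite (leq_trans _ nm) // ltnW.
have Phi_self_neq0 l : (l < n.+1)%N -> ip (Phi l) (Phi l) != 0.
  move=> ln; have [Phim sPhi _] := OPl l ln.
  rewrite inner_disc_self -(rmorph0 (real_complex R)) (inj_eq (@complexI R)).
  by rewrite gt_eqF // norm2_disc_gt0 ?monic_neq0 // sPhi (leq_trans ln).
pose c (l : 'I_n.+1) := ip 'X^(n.+1) (Phi l) / ip (Phi l) (Phi l).
pose S := \sum_(l < n.+1) c l *: Phi l.
have sS : (size S <= n.+1)%N.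
  apply: (big_ind (fun x : {poly R[i]} => (size x <= n.+1)%N)) => [|x y sx sy|l _].
  - by rewrite size_poly0.
  - by rewrite (leq_trans (size_polyD _ _)) // geq_max sx sy.
  by rewrite (leq_trans (size_scale_leq _ _)) //; have [_ -> _] := OPl l (ltn_ord l).
have sSX : (size (- S) < size ('X^(n.+1) : {poly R[i]}))%N.
  by rewrite size_polyN size_polyXn.
exists ('X^(n.+1) - S); split.
- by rewrite monicE lead_coefDl // lead_coefXn.
- by rewrite size_polyDl // size_polyXn.
apply: orthogonal_lower_degree => // l ln.
rewrite inner_discBl inner_disc_suml (bigD1 (Ordinal ln)) //= big1 ?addr0.
  by rewrite inner_discZl /c divfK ?subrr // Phi_self_neq0.
move=> l' l'l.
rewrite inner_discZl (Phi_orthogonal (OPl l ln) (OPl l' (ltn_ord l'))) ?mulr0 //.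
by apply: contra l'l => /eqP ll'; apply/eqP/val_inj; rewrite /= ll'.
Qed.

Lemma OP_norm2_min n P p :
  OP n P -> p \is monic -> size p = n.+1 -> norm2_disc w z P <= norm2_disc w z p.
Proof.
move=> [Pm sP orthP] pm sp.
have sd : (size (p - P)%R <= n)%N.
  by rewrite -[P]scale1r -(monic_coef_size pm sp) size_subZ_coef_leq ?sp.
move: (p - P) sd (subrK P p) => d sd <-.
have : (norm2_disc w z (d + P))%:C = (norm2_disc w z P + norm2_disc w z d)%:C.
  rewrite -inner_disc_self inner_discDl !inner_discDr orthP // [ip d P]inner_discC.
  by rewrite orthP // conjC0 addr0 add0r rmorphD /= -!inner_disc_self addrC.
by move/complexI ->; rewrite lerDl norm2_disc_ge0.
Qed.

End OrthogonalPolynomials.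

Section TwoRootsNearNode.
Variable R : realType.
Variable m : nat.
Variable w : 'I_m -> R.
Variable z : 'I_m -> R[i].
Hypothesis w_gt0 : forall j, 0 < w j.
Hypothesis z_inj : injective z.
Hypothesis z_unit : forall i, normc (z i) = 1.
Variables (n : nat) (P h : {poly R[i]}) (j : 'I_m) (d : R) (c1 c2 : R[i]).
Hypothesis P_OP : is_monic_OP w z n P.
Hypothesis n_le_m : (n <= m)%N.
Hypotheses (d_gt0 : 0 < d) (d_le1 : d <= 1).
Hypothesis z_sep : forall i, i != j -> d <= normc (z i - z j).
Hypothesis c1_near : normc (c1 - z j) < d ^+ 4 / 256.
Hypothesis c2_near : normc (c2 - z j) < d ^+ 4 / 256.
Hypothesis P_factor : P = ('X - c1%:P) * ('X - c2%:P) * h.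

Let u i := w i * normc h.[z i] ^+ 2.
Let U := \sum_(i | i != j) u i.
Let e1 := normc (c1 - z j).
Let e2 := normc (c2 - z j).

Let u_ge0 i : 0 <= u i.
Proof. by rewrite mulr_ge0 ?sqr_ge0 ?ltW. Qed.

Let h_neq0 : h != 0.
Proof.
apply/eqP => h0; case: P_OP => + _ _.
by rewrite P_factor h0 mulr0 monicE lead_coef0 eq_sym oner_eq0.
Qed.

Let size_h : (size h).+2 = n.+1.
Proof.
case: P_OP => _ + _; rewrite P_factor !size_mul ?mulf_neq0 ?polyXsubC_eq0 //.
by rewrite !size_XsubC; case: (size h).
Qed.

Let size_h_lt : (size h < n)%N.
Proof. by rewrite -ltnS -size_h. Qed.

Let near_le : d ^+ 4 / 256 <= d ^+ 2 / 4 /\ d ^+ 2 / 4 <= d / 4.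
Proof.
have d2_le_d : d ^+ 2 <= d by rewrite expr2; have := d_gt0; have := d_le1; nra.
have d4_le_d2 : d ^+ 4 <= d ^+ 2.
  rewrite -[d ^+ 4]/(d ^+ (2 + 2)) exprD; have := sqr_ge0 d; nra.
have := sqr_ge0 d; lra.
Qed.

(* Orthogonality of [P] to [h] and to [('X - c2) h], both of degree < n. *)
Let orth_h : \sum_i (u i)%:C * ((z i - c1) * (z i - c2)) = 0.
Proof.
case: P_OP => _ _ /(_ h (ltnW size_h_lt)) Ph0.
rewrite -[RHS]Ph0 /inner_disc P_factor; apply: eq_bigr => i _.
by rewrite !hornerM !hornerXsubC /u !rmorphM /= !normc_mulC; ring.
Qed.

Let orth_Xh : \sum_i (u i * normc (z i - c2) ^+ 2)%:C * (z i - c1) = 0.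
Proof.
have sXh : (size (('X - c2%:P) * h)%R <= n)%N.
  by rewrite size_mul ?polyXsubC_eq0 // size_XsubC add2n.
case: P_OP => _ _ /(_ _ sXh) PXh0.
rewrite -[RHS]PXh0 /inner_disc P_factor; apply: eq_bigr => i _.
by rewrite !hornerM !hornerXsubC /u !rmorphM /= !normc_mulC; ring.
Qed.

(* Projecting [orth_Xh] on the direction of [z j]: the other nodes lie
   at least [d] away on the circle, so their contribution is very negative. *)
Let far_mass_le : d ^+ 4 / 16 * U <= u j * e1 * e2 ^+ 2.
Proof.
have : \sum_i (u i * normc (z i - c2) ^+ 2) * Re ((z j)^* * (z i - c1)) = 0.
  have := congr1 (fun x => Re ((z j)^* * x)) orth_Xh.
  rewrite /= mulr0 mulr_sumr Re_sum => sum0.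
  rewrite -[RHS]/(Re 0) -sum0; apply: eq_bigr => i _.
  by rewrite [in RHS]mulrCA Re_realM.
rewrite (bigD1 j) //= addrC => sum0.
have term_j :
    u j * normc (z j - c2) ^+ 2 * Re ((z j)^* * (z j - c1)) <= u j * e1 * e2 ^+ 2.
  rewrite /e2 -normcB mulrAC ler_wpM2r ?sqr_ge0 // ler_wpM2l //.
  by rewrite /e1 normcB Re_conjM_le.
have terms_i : \sum_(i | i != j) u i * normc (z i - c2) ^+ 2 * Re ((z j)^* * (z i - c1))
    <= - (d ^+ 4 / 16 * U).
  rewrite /U mulr_sumr -sumrN; apply: ler_sum => i ij.
  have far_c2 : (d / 2) ^+ 2 <= normc (z i - c2) ^+ 2.
    rewrite lerXn2r ?nnegrE ?normc_ge0 ?divr_ge0 ?(ltW d_gt0) //.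
    have := le_normcD (z i - c2) (c2 - z j); rewrite addrA subrK.
    by have [? ?] := near_le; have := z_sep ij; have := c2_near; have := d_gt0; lra.
  have Re_le : Re ((z j)^* * (z i - c1)) <= - (d ^+ 2 / 4).
    apply: Re_conjM_far_le => //; [exact: ltW | exact: z_sep |].
    by have [? ?] := near_le; have := c1_near; lra.
  move: far_c2 Re_le (u_ge0 i) (sqr_ge0 d).
  rewrite expr_div_n -[d ^+ 4]/(d ^+ (2 + 2)) exprD.
  move: (normc _ ^+ 2) (Re _) (d ^+ 2) => B r d2 dB rd ui d2_ge0.
  have Br : B * r <= - (d2 / 4 * (d2 / 4)) by nra.
  nra.
have := lerD terms_i term_j; rewrite sum0; lra.
Qed.

(* Taking moduli in [orth_h]: the [j]-th term is balanced by the others. *)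
Let near_mass_le : u j * e1 * e2 <= 9 * U.
Proof.
move: orth_h; rewrite (bigD1 j) //= => /eqP; rewrite addr_eq0.
move=> /eqP /(congr1 (@normc R)).
rewrite normcN !normcM normc_real ger0_norm // (normcB (z j)) (normcB (z j)) mulrA => ->.
apply: le_trans (normc_sum_le _ _ _) _; rewrite /U mulr_sumr; apply: ler_sum => i ij.
rewrite !normcM normc_real ger0_norm // [9 * _]mulrC ler_wpM2l //.
have le3 c : normc (c - z j) < d ^+ 4 / 256 -> normc (z i - c) <= 3.
  move=> c_near; have := le_normcD (z i - z j) (z j - c); rewrite addrA subrK.
  have := normc_sub_circle_le2 (z_unit i) (z_unit j); rewrite (normcB (z j)).
  by have [? ?] := near_le; have := d_le1; lra.
have := le3 _ c1_near; have := le3 _ c2_near.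
have := normc_ge0 (z i - c1); have := normc_ge0 (z i - c2); nra.
Qed.

Let U_eq0 : U = 0.
Proof.
have U_ge0 : 0 <= U by rewrite sumr_ge0.
have : u j * e1 * e2 * e2 <= 9 * U * (d ^+ 4 / 256).
  apply: le_trans (ler_wpM2r (normc_ge0 _) near_mass_le) _.
  by rewrite ler_wpM2l ?mulr_ge0 // ltW.
rewrite -mulrA -expr2 mulrA => /(le_trans far_mass_le).
have := exprn_gt0 4 d_gt0; nra.
Qed.

Lemma no_two_roots_near_node : False.
Proof.
have h_vanish i : i \in predC1 j -> h.[z i] = 0.
  move=> ij; move/eqP: (psumr_eq0P (fun i _ => u_ge0 i) U_eq0 ij).
  by rewrite mulf_eq0 gt_eqF //= expf_eq0 /= normc_eq0 => /eqP.
move/eqP: h_neq0; apply; apply: poly_vanish_eq0 z_inj h_vanish _.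
have h_lt_m := leq_trans size_h_lt n_le_m.
by rewrite cardC1 card_ord -ltnS (ltn_predK h_lt_m).
Qed.

End TwoRootsNearNode.

Lemma horner_prod_XsubC_circle_le (R : rcfType) (s : seq R[i]) (y : R[i]) N :
  (forall x, x \in s -> normc x = 1) -> normc y = 1 -> (size s <= N)%N ->
  normc (\prod_(x <- s) ('X - x%:P)).[y] <= 2 ^+ N.
Proof.
move=> s_unit y1 sN; rewrite horner_prod normc_prod.
apply: le_trans (ler_weXn2l _ sN); last by rewrite ler1n.
elim: s s_unit {sN} => [|x s IH] s_unit; first by rewrite big_nil expr0.
rewrite big_cons exprS /= hornerXsubC; apply: ler_pM.
- exact: normc_ge0.
- by apply: prodr_ge0 => i _; exact: normc_ge0.
- by apply: normc_sub_circle_le2 => //; apply: s_unit; rewrite inE eqxx.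
by apply: IH => x' x's; apply: s_unit; rewrite inE x's orbT.
Qed.

Lemma horner_prod_XsubC_ge (R : rcfType) (s : seq R[i]) (y : R[i]) (r : R) :
  0 <= r -> (forall x, x \in s -> r <= normc (x - y)) ->
  r ^+ size s <= normc (\prod_(x <- s) ('X - x%:P)).[y].
Proof.
move=> r_ge0; rewrite horner_prod normc_prod.
elim: s => [|x s IH] s_far; first by rewrite big_nil expr0.
rewrite big_cons /= exprS hornerXsubC; apply: ler_pM; rewrite ?exprn_ge0 //.
  by rewrite normcB; apply: s_far; rewrite inE eqxx.
by apply: IH => x' x's; apply: s_far; rewrite inE x's orbT.
Qed.

Lemma mulr_le_halfsqrD (R : realFieldType) (W a b c : R) :
  0 <= W -> 0 <= a -> 0 <= b -> b <= c ->
  W * a * b <= W * a ^+ 2 / 2 + W * c ^+ 2 / 2.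
Proof.
move=> W_ge0 a_ge0 b_ge0 bc.
have : a * b <= a ^+ 2 / 2 + c ^+ 2 / 2.
  have : 0 <= c - b by rewrite subr_ge0.
  move/(mulr_ge0 a_ge0); have := sqr_ge0 (a - c); nra.
by move/(ler_wpM2l W_ge0); rewrite mulrDr !mulrA; lra.
Qed.

Section NodeBound.
Variable R : realType.
Variable m : nat.
Variable w : 'I_m -> R.
Variable z : 'I_m -> R[i].
Hypothesis w_gt0 : forall j, 0 < w j.
Hypothesis z_inj : injective z.
Hypothesis z_unit : forall i, normc (z i) = 1.
Variable k : nat.
Hypothesis k_le_m : (k <= m)%N.

Definition head_nodes : seq R[i] := [seq z (widen_ord k_le_m i) | i : 'I_k].

Lemma size_head_nodes : size head_nodes = k.
Proof. by rewrite size_map size_enum_ord. Qed.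

Lemma mem_head_nodes i : (z i \in head_nodes) = (i < k)%N.
Proof.
apply/mapP/idP => [[i' _ /z_inj ->] | ik]; first exact: ltn_ord i'.
by exists (Ordinal ik); rewrite ?mem_enum //; congr z; apply: val_inj.
Qed.

Lemma uniq_head_nodes : uniq head_nodes.
Proof.
rewrite map_inj_uniq ?enum_uniq // => a b /z_inj /(congr1 val) ab.
exact: val_inj.
Qed.

Lemma head_nodes_unit x : x \in head_nodes -> normc x = 1.
Proof. by case/mapP => i _ ->. Qed.

Definition node_poly_but (j : 'I_m) : {poly R[i]} :=
  \prod_(x <- rem (z j) head_nodes) ('X - x%:P).

Lemma root_node_poly_but (j i : 'I_m) :
  root (node_poly_but j) (z i) = (i < k)%N && (i != j).
Proof.
rewrite root_prod_XsubC (mem_rem_uniq _ uniq_head_nodes) inE mem_head_nodes andbC.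
by rewrite (inj_eq z_inj).
Qed.

Lemma size_node_poly_but (j : 'I_m) : (j < k)%N -> size (node_poly_but j) = k.
Proof.
move=> jk; rewrite size_prod_XsubC size_rem ?mem_head_nodes // size_head_nodes.
by rewrite prednK // (leq_ltn_trans _ jk).
Qed.

Local Notation tail_mass := (\sum_(i : 'I_m | (k <= i)%N) w i).

(* Comparison with the monic polynomial ['X * prod_(i < k) ('X - z i)], which
   vanishes at the first [k] nodes and is bounded by [2 ^ k] on the circle. *)
Lemma norm2_OP_le P : is_monic_OP w z k.+1 P ->
  norm2_disc w z P <= (2 ^+ k) ^+ 2 * tail_mass.
Proof.
move=> P_OP; pose p := (\prod_(x <- head_nodes) ('X - x%:P)) * 'X.
have p_monic : p \is monic by rewrite monicMr ?monicX // monic_prod_XsubC.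
have size_p : size p = k.+2.
  by rewrite size_mulX ?monic_neq0 ?monic_prod_XsubC // size_prod_XsubC size_head_nodes.
apply: le_trans (OP_norm2_min w_gt0 P_OP p_monic size_p) _.
rewrite /norm2_disc [X in _ <= _ * X]big_mkcond mulr_sumr; apply: ler_sum => i _.
case: ifP => ki.
  rewrite [_ * w i]mulrC ler_wpM2l ?(ltW (w_gt0 i)) //.
  rewrite lerXn2r ?nnegrE ?normc_ge0 ?exprn_ge0 //.
  rewrite /p hornerM hornerX normcM z_unit mulr1.
  apply: horner_prod_XsubC_circle_le => //; first exact: head_nodes_unit.
  by rewrite size_head_nodes.
have /eqP -> : root p (z i).
  by rewrite /p rootM root_prod_XsubC mem_head_nodes ltnNge ki.
by rewrite normc0 expr0n /= !mulr0.
Qed.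

Lemma OP_node_value_le P (j : 'I_m) : is_monic_OP w z k.+1 P -> (j < k)%N ->
  w j * normc P.[z j] * normc (node_poly_but j).[z j] <= (2 ^+ k) ^+ 2 * tail_mass.
Proof.
move=> P_OP jk; set q := node_poly_but j; set B : R := (2 ^+ k) ^+ 2.
have w_ge0 i : 0 <= w i := ltW (w_gt0 i).
have node_term : w j * normc P.[z j] * normc q.[z j] <=
    \sum_(i | i != j) w i * normc P.[z i] * normc q.[z i].
  have [_ _ /(_ q)] := P_OP; rewrite size_node_poly_but // => /(_ (leqnSn k)).
  rewrite /inner_disc (bigD1 j) //= => /eqP; rewrite addr_eq0.
  move=> /eqP /(congr1 (@normc R)).
  rewrite normcN !normcM normc_real ger0_norm // normc_conjC => ->.
  apply: le_trans (normc_sum_le _ _ _) _; apply: ler_sum => i _.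
  by rewrite !normcM normc_real ger0_norm // normc_conjC.
pose g i := w i * normc P.[z i] ^+ 2 / 2 + (if (k <= i)%N then w i * B else 0) / 2.
have g_ge0 i : 0 <= g i.
  rewrite /g addr_ge0 // divr_ge0 //; first by rewrite mulr_ge0 ?sqr_ge0.
  by case: ifP; rewrite // mulr_ge0 ?sqr_ge0.
have term_le i : i != j -> w i * normc P.[z i] * normc q.[z i] <= g i.
  move=> ij; rewrite /g; case: ifP => ki.
    rewrite /B; apply: mulr_le_halfsqrD; rewrite ?normc_ge0 //.
    apply: horner_prod_XsubC_circle_le => //; first by move=> x /mem_rem /head_nodes_unit.
    by rewrite size_rem ?size_head_nodes ?leq_pred // mem_head_nodes.
  have /eqP -> : root q (z i) by rewrite root_node_poly_but ij ltnNge ki.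
  by rewrite normc0 mulr0 mul0r addr0 divr_ge0 // mulr_ge0 ?sqr_ge0.
apply: le_trans node_term _; apply: le_trans (ler_sum _ term_le) _.
apply: le_trans (_ : \sum_i g i <= _).
  by rewrite [X in _ <= X](bigD1 j) //= lerDr.
rewrite /g big_split /= -!mulr_suml -/(norm2_disc w z P).
have -> : \sum_(i < m) (if (k <= i)%N then w i * B else 0) = B * tail_mass.
  rewrite [in RHS]big_mkcond mulr_sumr; apply: eq_bigr => i _.
  by case: ifP; rewrite ?mulr0 // mulrC.
have := norm2_OP_le P_OP; rewrite -/B; lra.
Qed.

End NodeBound.

Section RootNearNode.
Variable R : realType.
Variable m : nat.
Variable w : 'I_m -> R.
Variable z : 'I_m -> R[i].
Hypothesis w_gt0 : forall j, 0 < w j.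
Hypothesis z_inj : injective z.
Hypothesis z_unit : forall i, normc (z i) = 1.

(* By [no_two_roots_near_node] all roots of [P] but one lie at distance
   [>= r0] from [z j], so [|P (z j)| >= |zeta - z j| * r0 ^ n]. *)
Lemma OP_unique_root_near_node n P (j : 'I_m) (d : R) :
  let r0 := d ^+ 4 / 256 in
  is_monic_OP w z n.+1 P -> (n.+1 <= m)%N ->
  0 < d -> d <= 1 -> (forall i, i != j -> d <= normc (z i - z j)) ->
  normc P.[z j] < r0 ^+ n.+1 ->
  exists zeta : R[i],
    [/\ normc (zeta - z j) < r0, root P zeta, mup zeta P = 1%N,
        (forall v, normc (v - z j) < r0 -> root P v -> v = zeta) &
        normc (zeta - z j) * r0 ^+ n <= normc P.[z j]].
Proof.
move=> r0 P_OP nm d_gt0 d_le1 z_sep P_small.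
have r0_gt0 : 0 < r0 by rewrite divr_gt0 ?exprn_gt0.
have [roots P_split] := closed_field_poly_normal P.
have [P_monic size_P _] := P_OP.
rewrite (monicP P_monic) scale1r in P_split.
have size_roots : size roots = n.+1.
  by move: size_P; rewrite P_split size_prod_XsubC => -[].
have [/hasP [zeta zeta_root zeta_near] | /hasPn all_far] :=
  boolP (has (fun x => normc (x - z j) < r0) roots); last first.
  move: P_small; rewrite -size_roots P_split ltNge => /negP; case.
  by apply: horner_prod_XsubC_ge => [|x /all_far]; [exact: ltW | rewrite leNgt].
have P_zeta : P = ('X - zeta%:P) * \prod_(x <- rem zeta roots) ('X - x%:P).
  by rewrite P_split (big_rem _ zeta_root).
have others_far x : x \in rem zeta roots -> r0 <= normc (x - z j).
  move=> x_root; rewrite leNgt; apply/negP => x_near.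
  apply: (no_two_roots_near_node w_gt0 z_inj z_unit P_OP nm d_gt0 d_le1 z_sep
    zeta_near x_near (h := \prod_(y <- rem x (rem zeta roots)) ('X - y%:P))).
  by rewrite P_zeta (big_rem _ x_root) mulrA.
have zeta_other v : v \in roots -> v != zeta -> v \in rem zeta roots.
  by move=> + vz; rewrite (perm_mem (perm_to_rem zeta_root)) inE (negPf vz).
exists zeta; split => //.
- by rewrite P_split root_prod_XsubC.
- rewrite P_split mu_prod_XsubC (permP (perm_to_rem zeta_root)) /= eqxx add1n.
  congr S; apply/count_memPn/negP => /others_far.
  by rewrite leNgt zeta_near.
- move=> v v_near; rewrite P_split root_prod_XsubC => v_root.
  apply/eqP/negPn/negP => /(zeta_other _ v_root) /others_far.
  by rewrite leNgt v_near.
rewrite P_zeta hornerM normcM hornerXsubC normcB ler_wpM2l ?normc_ge0 //.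
by have := horner_prod_XsubC_ge (ltW r0_gt0) others_far; rewrite size_rem // size_roots.
Qed.

End RootNearNode.

Lemma node_separation (R : rcfType) (I : finType) (z : I -> R[i]) : injective z ->
  exists d : R, [/\ 0 < d, d <= 1 & forall i j, i != j -> d <= normc (z i - z j)].
Proof.
move=> z_inj; pose f (p : I * I) := Num.min 1 (normc (z p.1 - z p.2)).
have f_bounds p : p.1 != p.2 -> 0 < f p <= 1.
  move=> p12; rewrite ge_min lexx andbT lt_min ltr01 lt_def normc_ge0 andbT normc_eq0.
  by rewrite subr_eq0 (inj_eq z_inj).
exists (\prod_(p | p.1 != p.2) f p); split.
- by apply: prodr_gt0 => p /f_bounds /andP [].
- by apply: prodr_ile1 => p /f_bounds /andP [/ltW -> ->].
move=> i j ij; rewrite (bigD1 (i, j)) //=.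
apply: le_trans (ler_piMr _ _) _.
- by have /andP [/ltW] := f_bounds (i, j) ij.
- by apply: prodr_ile1 => p /andP [/f_bounds /andP [/ltW -> ->] _].
by rewrite ge_min lexx orbT.
Qed.

Lemma in_earlier_Kgroup_gap (R : realType) m (G : 'I_m -> R) (k j : 'I_m) :
  (forall i i' : 'I_m, (i <= i')%N -> G i' <= G i) ->
  in_earlier_Kgroup G k.+1 j -> (j < k)%N /\ G k < G j.
Proof.
move=> G_noninc /andP [jk not_const]; rewrite ltnS in jk; split => //.
rewrite lt_def (G_noninc _ _ (ltnW jk)) andbT; apply: contra not_const => /eqP Gkj.
have G_const (i : 'I_m) : (j <= i)%N -> (i < k.+1)%N -> G i = G k.
  move=> ji ik; apply/eqP; rewrite eq_le -{1}Gkj (G_noninc _ _ ji).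
  exact: G_noninc.
apply/forallP => i; apply/forallP => i'; apply/implyP.
by case/andP => /andP [/andP [ji ik] ji'] i'k; rewrite !G_const.
Qed.

Lemma expR_decay_threshold (R : realType) (I : finType) (a : I -> R) (D eps : R) :
  0 < eps -> exists T, 0 <= T /\
    forall t, T <= t -> forall i, a i < 0 -> D * expR (t * a i) < eps.
Proof.
move=> eps_gt0; pose T i := if a i < 0 then `|D| / (eps * - a i) else 0.
have T_ge0 i : 0 <= T i.
  rewrite /T; case: ifP => // ai; apply: divr_ge0 => //.
  by apply: mulr_ge0; [exact: ltW | rewrite oppr_ge0; exact: ltW].
exists (\sum_i T i); split => [|t Tt i ai]; first by apply: sumr_ge0.
have /le_trans/(_ Tt) Ti_t : T i <= \sum_i T i by rewrite (bigD1 i) //= lerDl sumr_ge0.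
move: Ti_t; rewrite /T ai ler_pdivrMr ?mulr_gt0 ?oppr_gt0 // => Dt.
rewrite -[t * a i]opprK expRN ltr_pdivrMr ?expR_gt0 //.
apply: le_lt_trans (ler_norm D) _.
have := ler_wpM2l (ltW eps_gt0) (expR_ge1Dx (- (t * a i))).
rewrite mulrDr mulr1; move: Dt; rewrite mulrCA -mulrN; lra.
Qed.

Section TiltedWeights.
Variable R : realType.
Variable m : nat.
Variables mu G : 'I_m -> R.
Hypothesis mu_gt0 : forall j, 0 < mu j.
Hypothesis mu_sum1 : \sum_(j < m) mu j = 1.
Hypothesis G_noninc : forall i j : 'I_m, (i <= j)%N -> G j <= G i.
Variable z : 'I_m -> R[i].
Hypothesis z_inj : injective z.
Hypothesis z_unit : forall i, normc (z i) = 1.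
Local Notation Z t := (\sum_(l < m) mu l * expR (t * G l)).

Lemma tilt_normalizer_ge (t : R) i : mu i * expR (t * G i) <= Z t.
Proof.
rewrite (bigD1 i) //= lerDl.
by apply: sumr_ge0 => l _; rewrite mulr_ge0 ?expR_ge0 // ltW.
Qed.

Lemma tilted_gt0 (t : R) i : 0 < tilted mu G t i.
Proof.
have mu_e_gt0 : 0 < mu i * expR (t * G i) by rewrite mulr_gt0 ?expR_gt0.
by rewrite divr_gt0 // (lt_le_trans mu_e_gt0 (tilt_normalizer_ge t i)).
Qed.

Lemma tilted_tail_le (t : R) (k : 'I_m) : 0 <= t ->
  \sum_(i < m | (k <= i)%N) tilted mu G t i <= expR (t * G k) / Z t.
Proof.
move=> t_ge0; have Z_gt0 : 0 < Z t.
  exact: lt_le_trans (mulr_gt0 (mu_gt0 k) (expR_gt0 _)) (tilt_normalizer_ge t k).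
apply: (@le_trans _ _ (\sum_(i < m | (k <= i)%N) mu i * (expR (t * G k) / Z t))).
  apply: ler_sum => i ki; rewrite /tilted -mulrA ler_wpM2l ?(ltW (mu_gt0 i)) //.
  by rewrite ler_wpM2r ?invr_ge0 ?(ltW Z_gt0) // ler_expR ler_wpM2l ?G_noninc.
rewrite -mulr_suml ler_piMl ?divr_ge0 ?expR_ge0 ?(ltW Z_gt0) // -mu_sum1.
rewrite [X in X <= _]big_mkcond /=; apply: ler_sum => i _.
by case: ifP => _ //; exact: ltW.
Qed.

Lemma Phi_tilted_node_le (t : R) (k j : 'I_m) : 0 <= t -> (j < k)%N ->
  normc (Phi (tilted mu G t) z k.+1).[z j] <= (2 ^+ k) ^+ 2 /
    (mu j * normc (node_poly_but z (ltnW (ltn_ord k)) j).[z j]) * expR (t * (G k - G j)).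
Proof.
move=> t_ge0 jk; set q := node_poly_but _ _ j; set P := Phi _ _ _.
set B : R := (2 ^+ k) ^+ 2.
have wt_gt0 i : 0 < tilted mu G t i by exact: tilted_gt0.
have P_OP : is_monic_OP (tilted mu G t) z k.+1 P := Phi_OP wt_gt0 z_inj (ltn_ord k).
have q_gt0 : 0 < normc q.[z j].
  rewrite lt_def normc_ge0 andbT normc_eq0 -/(root _ _) /q (root_node_poly_but z_inj).
  by apply/negP => /andP [_ /eqP].
have Z_gt0 : 0 < Z t.
  exact: lt_le_trans (mulr_gt0 (mu_gt0 k) (expR_gt0 _)) (tilt_normalizer_ge t k).
have node_le := OP_node_value_le wt_gt0 z_inj z_unit (ltnW (ltn_ord k)) P_OP jk.
have := le_trans node_le (ler_wpM2l (sqr_ge0 _) (tilted_tail_le k t_ge0)).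
rewrite -/B -/q /tilted mulrBr expRD expRN.
move: (normc P.[z j]) (normc q.[z j]) q_gt0 (mu_gt0 j) (expR_gt0 (t * G j)) Z_gt0.
move: (expR (t * G j)) (expR (t * G k)) (Z t) => ej ek Zt.
move=> a b b_gt0 muj_gt0 ej_gt0 Zt_gt0 H.
have c_gt0 : 0 < Zt / (mu j * ej * b) by rewrite divr_gt0 ?mulr_gt0.
have -> : a = mu j * ej / Zt * a * b * (Zt / (mu j * ej * b)).
  by field; rewrite !gt_eqF.
have -> : B / (mu j * b) * (ek / ej) = B * (ek / Zt) * (Zt / (mu j * ej * b)).
  by field; rewrite !gt_eqF.
by rewrite ler_wpM2r // ltW.
Qed.

Lemma Phi_tilted_node_bound (k : 'I_m) : exists C : R, forall (t : R) (j : 'I_m),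
  0 <= t -> (j < k)%N ->
  normc (Phi (tilted mu G t) z k.+1).[z j] <= C * expR (t * (G k - G j)).
Proof.
pose D j := (2 ^+ k) ^+ 2 /
  (mu j * normc (node_poly_but z (ltnW (ltn_ord k)) j).[z j]).
have D_ge0 j : 0 <= D j.
  by rewrite divr_ge0 ?exprn_ge0 // mulr_ge0 ?normc_ge0 // ltW.
exists (\sum_j D j) => t j t_ge0 jk.
apply: le_trans (Phi_tilted_node_le t_ge0 jk) _.
by rewrite ler_wpM2r ?expR_ge0 // (bigD1 j) //= lerDl sumr_ge0.
Qed.

End TiltedWeights.

Theorem theorem3p3 (R : realType) (m : nat) (z : 'I_m -> R[i])
    (mu G : 'I_m -> R) (k : 'I_m) :
  injective z ->
  (forall j, `|z j| = 1) ->
  (forall j, 0 < mu j) ->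
  \sum_(j < m) mu j = 1 ->
  (forall i j : 'I_m, (i <= j)%N -> G j <= G i) ->
  exists r0 : R, exists T : R, exists Cst : R,
    0 < r0 /\ 0 <= T /\
    forall t : R, T <= t ->
    forall j : 'I_m, in_earlier_Kgroup G k.+1 j ->
    let P := Phi (tilted mu G t) z k.+1 in
    exists zeta : R[i],
      [/\ `|zeta - z j| < r0%:C,
          root P zeta,
          mup zeta P = 1%N,
          (forall w : R[i], `|w - z j| < r0%:C -> root P w -> w = zeta) &
          `|zeta - z j| <= (Cst * expR (t * (G k - G j)))%:C].
Proof.
move=> z_inj z_abs mu_gt0 mu_sum1 G_noninc.
have z_unit i : normc (z i) = 1 by apply: complexI; rewrite -normr_normc z_abs.
have [d [d_gt0 d_le1 z_sep]] := node_separation z_inj.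
set r0 := d ^+ 4 / 256.
have r0_gt0 : 0 < r0 by rewrite divr_gt0 ?exprn_gt0.
have [C P_bound] := Phi_tilted_node_bound mu_gt0 mu_sum1 G_noninc z_inj z_unit k.
have [T [T_ge0 T_decay]] :=
  expR_decay_threshold (fun j => G k - G j) C (exprn_gt0 k.+1 r0_gt0).
exists r0, T, (C / r0 ^+ k); split => //; split => // t Tt j.
move=> /(in_earlier_Kgroup_gap G_noninc) [jk Gkj] P.
have P_near := P_bound t j (le_trans T_ge0 Tt) jk; rewrite -/P in P_near.
have P_small : normc P.[z j] < r0 ^+ k.+1.
  by apply: le_lt_trans P_near (T_decay t Tt j _); rewrite subr_lt0.
have wt_gt0 i : 0 < tilted mu G t i by exact: tilted_gt0.
have [zeta [zeta_near zeta_root zeta_simple zeta_unique zeta_le]] :=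
  OP_unique_root_near_node wt_gt0 z_inj z_unit (Phi_OP wt_gt0 z_inj (ltn_ord k))
    (ltn_ord k) d_gt0 d_le1 (fun i ij => z_sep i j ij) P_small.
exists zeta; split => //; rewrite ?normr_normc ?ltcR ?lecR //.
- by move=> v; rewrite normr_normc ltcR; exact: zeta_unique.
by rewrite mulrAC ler_pdivlMr ?exprn_gt0 // (le_trans zeta_le P_near).
Qed.
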